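(* Let $q\in(0,1]$. Consider the policy that directly follows the ex ante solution: whenever a task of type $s$ arrives at time $t$, it notifies each volunteer $v$ independently with probability $x^*_{v,s,t}$. On instances of the online volunteer notification problem whose inter-activity time distribution has minimum discrete hazard rate $q$, this policy achieves a competitive ratio of at most $q$; that is, for every $c>q$ there is such an instance $\mathcal{I}$ on which the policy's expected number of completed tasks is less than $c\,\mathbf{LP}_{\mathcal{I}}$.
   Context: Online volunteer notification problem. An instance $\mathcal{I}$ consists of volunteers $[V]$, task types $[S]$, horizon $T$, arrival probabilities $\lambda_{s,t}\ge0$ with $\sum_s\lambda_{s,t}\le1$, match probabilities $p_{v,s}\in[0,1]$, and a probability mass function $g$ on the positive integers with CDF $G(\tau)=\sum_{i\le\tau}g(i)$, $G(0)=0$. In each period $t$ at most one task arrives, of type $s$ with probability $\lambda_{s,t}$, independently across periods. All volunteers start active. Upon an arrival the platform notifies a subset of volunteers; each notified active volunteer $v$ responds positively independently with probability $p_{v,s}$; the task is completed iff at least one does. A volunteer active and notified at time $t$ becomes inactive (regardless of response) and active again at $t+Z$, $Z\sim g$ independent; inactive volunteers ignore notifications and are unaffected by them. MDHR: $q=\min_{\tau\in\mathbb{N}}\frac{g(\tau)}{1-G(\tau-1)}$ (with $\frac00:=1$). $\mathcal{P}$: set of $\mathbf{x}$ with $0\le x_{v,s,t}\le1$ and $\sum_{\tau=1}^t\sum_s\lambda_{s,\tau}x_{v,s,\tau}(1-G(t-\tau))\le1$ for all $v,t$; $\mathbf{LP}_{\mathcal{I}}=\max_{\mathbf{x}\in\mathcal{P}}\sum_{t,s}\lambda_{s,t}\min\{\sum_vx_{v,s,t}p_{v,s},1\}$.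 Ex ante solution: $f(\mathbf{x})=\sum_{t,s}\lambda_{s,t}(1-\prod_v(1-x_{v,s,t}p_{v,s}))$; $\mathbf{x}^*_{LP}$ optimal for $\mathbf{LP}_{\mathcal{I}}$; $\mathbf{x}^*_{AA}$ output of: $\mathbf{x}^0=\mathbf{0}$, for $i=1..m$ ($m\in\mathbb{N}$) $\mathbf{y}^i\in\arg\max_{\mathbf{x}\in\mathcal{P}}\langle\mathbf{x},\nabla f(\mathbf{x}^{i-1})\rangle$, $\mathbf{x}^i=\mathbf{x}^{i-1}+\mathbf{y}^i/m$, output $\mathbf{x}^m$; $\mathbf{x}^*_{SQ}$ built for $v=1..V$ in order, $(x^{SQ}_{v,s,t})_{s,t}$ optimal for $\max\sum_{t,s}\lambda_{s,t}\prod_{u<v}(1-p_{u,s}x^{SQ}_{u,s,t})p_{v,s}x_{v,s,t}$ s.t. $0\le x_{v,s,t}\le1$ and $\sum_{\tau\le t}\sum_s\lambda_{s,\tau}x_{v,s,\tau}(1-G(t-\tau))\le1$ for all $t$; $\mathbf{x}^*\in\arg\max_{\mathbf{x}\in\{\mathbf{x}^*_{LP},\mathbf{x}^*_{AA},\mathbf{x}^*_{SQ}\}}f(\mathbf{x})$. *)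

From HB Require Import structures.
From mathcomp Require Import all_boot all_order all_algebra.
From mathcomp Require Import boolp classical_sets reals topology normedtype sequences.
Set Implicit Arguments. Unset Strict Implicit. Unset Printing Implicit Defensive.
Import Order.TTheory GRing.Theory Num.Theory numFieldNormedType.Exports.
Local Open Scope classical_set_scope.
Local Open Scope ring_scope.

Section OVN.
Variable R : realType.

(* An instance.  Periods 1..T are represented by t : 'I_T (t stands for period t+1). *)
Local Unset Implicit Arguments.
Record instance := Instance {
  nV : nat; nS : nat; nT : nat;
  lam : 'I_nS -> 'I_nT -> R;
  pr  : 'I_nV -> 'I_nS -> R;
  gm  : nat -> R
}.
Local Set Implicit Arguments.

Definition Gc (g : nat -> R) (k : nat) : R := \sum_(1 <= i < k.+1) g i.

Definition is_pmf_pos (g : nat -> R) : Prop :=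
  [/\ g 0%N = 0, (forall n, 0 <= g n) &
      (fun n => \sum_(0 <= k < n) g k) @ \oo --> (1 : R)].

Definition valid (I : instance) : Prop :=
  [/\ (forall s t, 0 <= lam I s t),
      (forall t, \sum_(s < nS I) lam I s t <= 1),
      (forall v s, 0 <= pr I v s <= 1) &
      is_pmf_pos (gm I)].

(* discrete hazard rate at tau >= 1, with 0/0 := 1 *)
Definition hazard (g : nat -> R) (tau : nat) : R :=
  if 1 - Gc g tau.-1 == 0 then 1 else g tau / (1 - Gc g tau.-1).

Definition mdhr (g : nat -> R) (q : R) : Prop :=
  (exists2 tau, (0 < tau)%N & hazard g tau = q) /\
  (forall tau, (0 < tau)%N -> q <= hazard g tau).

Definition sol (I : instance) := 'I_(nV I) -> 'I_(nS I) -> 'I_(nT I) -> R.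

Definition rowfeas (I : instance) (y : 'I_(nS I) -> 'I_(nT I) -> R) : Prop :=
  (forall s t, 0 <= y s t <= 1) /\
  (forall t : 'I_(nT I),
     \sum_(tau < nT I | (tau <= t)%N) \sum_(s < nS I)
        lam I s tau * y s tau * (1 - Gc (gm I) (t - tau)) <= 1).

Definition inP (I : instance) (x : sol I) : Prop := forall v, rowfeas (x v).

Definition lp_obj (I : instance) (x : sol I) : R :=
  \sum_(t < nT I) \sum_(s < nS I)
    lam I s t * Num.min (\sum_(v < nV I) x v s t * pr I v s) 1.

(* LP_I = max over P of lp_obj (written as sup, which equals the max) *)
Definition LPval (I : instance) : R := sup [set lp_obj x | x in inP (I:=I)].

Definition fobj (I : instance) (x : sol I) : R :=
  \sum_(t < nT I) \sum_(s < nS I)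
    lam I s t * (1 - \prod_(v < nV I) (1 - x v s t * pr I v s)).

Definition gradf (I : instance) (x : sol I) : sol I := fun v s t =>
  lam I s t * pr I v s * \prod_(u < nV I | u != v) (1 - x u s t * pr I u s).

Definition inner (I : instance) (x y : sol I) : R :=
  \sum_(v < nV I) \sum_(s < nS I) \sum_(t < nT I) x v s t * y v s t.

Definition is_LP_opt (I : instance) (x : sol I) : Prop :=
  inP x /\ forall y : sol I, inP y -> lp_obj y <= lp_obj x.

(* x is a possible output of the AA (continuous greedy) procedure with m steps *)
Definition is_AA_out (m : nat) (I : instance) (x : sol I) : Prop :=
  exists xs : nat -> sol I,
    [/\ (forall v s t, xs 0%N v s t = 0),
        (forall i, (0 < i <= m)%N ->
           exists y : sol I,
             [/\ inP y,
                 (forall z : sol I, inP z -> inner z (gradf (xs i.-1)) <= inner y (gradf (xs i.-1))) &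
                 (forall v s t, xs i v s t = xs i.-1 v s t + y v s t / m%:R)]) &
        (forall v s t, x v s t = xs m v s t)].

Definition sq_obj (I : instance) (x : sol I) (v : 'I_(nV I))
    (y : 'I_(nS I) -> 'I_(nT I) -> R) : R :=
  \sum_(t < nT I) \sum_(s < nS I)
    lam I s t * (\prod_(u < nV I | (u < v)%N) (1 - pr I u s * x u s t))
      * pr I v s * y s t.

Definition is_SQ_out (I : instance) (x : sol I) : Prop :=
  forall v, rowfeas (x v) /\
    forall y : 'I_(nS I) -> 'I_(nT I) -> R, rowfeas y -> sq_obj x v y <= sq_obj x v (x v).

Definition exante (m : nat) (I : instance) (x : sol I) : Prop :=
  exists xLP xAA xSQ : sol I,
    [/\ is_LP_opt xLP, is_AA_out m xAA, is_SQ_out xSQ,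
        (forall v s t, x v s t = xLP v s t) \/ (forall v s t, x v s t = xAA v s t)
          \/ (forall v s t, x v s t = xSQ v s t) &
        [/\ fobj xLP <= fobj x, fobj xAA <= fobj x & fobj xSQ <= fobj x]].

Section Policy.
Variable I : instance.
Variable x : sol I.

Definition lamN (s : 'I_(nS I)) (t : nat) : R :=
  if (insub t : option 'I_(nT I)) is Some i then lam I s i else 0.
Definition xN (v : 'I_(nV I)) (s : 'I_(nS I)) (t : nat) : R :=
  if (insub t : option 'I_(nT I)) is Some i then x v s i else 0.

(* delay index d : 'I_(T+1): d < T means Z = d+1; d = T means Z > T
   (volunteer never active again within the horizon) *)
Definition wdelay (d : 'I_(nT I).+1) : R :=
  if (d < nT I)%N then gm I d.+1 else 1 - Gc (gm I) (nT I).

(* val k r = expected number of tasks completed in the last k periods,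
   starting at (0-indexed) time nT - k, where volunteer v is active at time t
   iff r v <= t. *)
Fixpoint val (k : nat) (r : 'I_(nV I) -> nat) : R :=
  match k with
  | 0%N => 0
  | k'.+1 =>
    let t := (nT I - k)%N in
    \sum_(s < nS I) lamN s t *
      \sum_(N : {set 'I_(nV I)})
        (\prod_(v < nV I) (if v \in N then xN v s t else 1 - xN v s t)) *
        ((1 - \prod_(v < nV I | (v \in N) && (r v <= t)%N) (1 - pr I v s)) +
         \sum_(D : {ffun 'I_(nV I) -> 'I_(nT I).+1})
           (\prod_(v < nV I)
              (if (v \in N) && (r v <= t)%N then wdelay (D v)
               else ((D v == ord0) : nat)%:R)) *
           val k' (fun v => if (v \in N) && (r v <= t)%N
                            then (t + D v + 1)%N else r v))
    + (1 - \sum_(s < nS I) lamN s t) * val k' r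
  end.

Definition reward : R := val (nT I) (fun _ => 0%N).
End Policy.

End OVN.

Arguments nV {R} _.
Arguments nS {R} _.
Arguments nT {R} _.
Arguments lam {R} _ _ _.
Arguments pr {R} _ _ _.
Arguments gm {R} _ _.

(* One volunteer, two periods. A task that the volunteer accepts with probability eps
   arrives surely in period 1; a task that it accepts surely arrives with probability q
   in period 2. A notified volunteer returns after one period with probability q and
   after two otherwise, so the minimum hazard rate is q. Notifying in both periods is
   feasible with LP value eps + q. On this instance the LP objective, the linearised
   objective of every continuous-greedy step and the sequential objective all reduce to
   the same linear form, with positive weights on exactly these two entries, so every
   ex ante solution notifies in both periods. The policy then earns only eps + q^2,
   since the volunteer is back for period 2 with probability q; as eps -> 0 the ratio
   tends to q. *)

From Pilot Require Import Defs.
From HB Require Import structures.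
From mathcomp Require Import all_boot all_order all_algebra.
From mathcomp Require Import boolp classical_sets reals topology normedtype sequences.
From mathcomp Require Import ring lra.

Set Implicit Arguments.
Unset Strict Implicit.
Unset Printing Implicit Defensive.
Import Order.TTheory GRing.Theory Num.Theory numFieldNormedType.Exports.
Local Open Scope ring_scope.

Lemma Gc0 (R : realType) (g : nat -> R) : Gc g 0 = 0.
Proof. by rewrite /Gc big_geq. Qed.

Lemma eq1_of_weighted_sum_ge (R : realDomainType) (a b y z : R) :
  0 < a -> 0 < b -> y <= 1 -> z <= 1 -> a + b <= a * y + b * z -> y = 1 /\ z = 1.
Proof.
move=> a0 b0 y1 z1 h.
have ey : a * (1 - y) = 0 by nra.
have ez : b * (1 - z) = 0 by nra.
move: ey ez => /eqP + /eqP; rewrite !mulf_eq0 !subr_eq0 (gt_eqF a0) (gt_eqF b0) /=.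
by move=> /eqP <- /eqP <-.
Qed.

Lemma lamN_ord (R : realType) (I : instance R) s (t : 'I_(nT I)) : lamN s t = lam I s t.
Proof. by rewrite /lamN valK. Qed.

Lemma xN_ord (R : realType) (I : instance R) (x : sol I) v s (t : 'I_(nT I)) :
  xN x v s t = x v s t.
Proof. by rewrite /xN valK. Qed.

Lemma big_set_ord1 (V : nmodType) (F : {set 'I_1} -> V) :
  \sum_N F N = F finset.set0 + F [set: 'I_1].
Proof.
have T0 : [set: 'I_1] != finset.set0 by apply/eqP => /setP/(_ ord0); rewrite !inE.
rewrite (bigD1 [set: 'I_1]) // (bigD1 finset.set0) 1?eq_sym //= big1 ?addr0 1?addrC //.
move=> N /andP[NT N0].
case: (boolP (ord0 \in N)) => N_0; [move: NT | move: N0] => /eqP[]; apply/setP => i.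
  by rewrite (ord1 i) !inE N_0.
by rewrite (ord1 i) !inE (negbTE N_0).
Qed.

Lemma ratio_lt_of_small_eps (R : realFieldType) (q c eps : R) :
  0 < q -> q < c -> 0 < eps -> eps < q * (c - q) -> eps + q * q < c * (eps + q).
Proof. by move=> q0 qc eps0 eps_gap; nra. Qed.

Section HardInstance.
Variable R : realType.
Variables eps q : R.

Definition return_pmf (n : nat) : R :=
  if n == 1%N then q else if n == 2%N then 1 - q else 0.

Definition arrival (s t : 'I_2) : R :=
  if val s == val t then (if val t == 0%N then 1 else q) else 0.

Definition match_prob (v : 'I_1) (s : 'I_2) : R := if val s == 0%N then eps else 1.

Definition hard_instance : instance R := @Instance R 1 2 2 arrival match_prob return_pmf.

Lemma Gc_return_pmf k : Gc return_pmf k = if k == 0%N then 0 else if k == 1%N then q else 1.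
Proof.
elim: k => [|k IH]; first exact: Gc0.
rewrite /Gc big_nat_recr //= -/(Gc _ _) IH /return_pmf.
by case: k {IH} => [|[|k]] /=; rewrite ?add0r ?addr0 //; ring.
Qed.

Lemma hazard_return_pmf tau :
  (0 < tau)%N -> hazard return_pmf tau = if tau == 1%N then q else 1.
Proof.
rewrite /hazard Gc_return_pmf /return_pmf.
case: tau => [|[|[|tau]]] //= _; rewrite ?subr0 ?oner_eq0 ?divr1 ?subrr ?eqxx //.
by case: eqP => // /eqP q1; rewrite divff.
Qed.

Hypothesis eps_range : 0 < eps <= 1.
Hypothesis q_range : 0 < q <= 1.

Lemma mdhr_return_pmf : mdhr return_pmf q.
Proof.
split; first by exists 1%N; rewrite ?hazard_return_pmf.
move=> tau /[dup] tau0 /hazard_return_pmf ->; case: eqP => // _.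
by case/andP: q_range.
Qed.

Lemma is_pmf_pos_return_pmf : is_pmf_pos return_pmf.
Proof.
have [q0 q1] := andP q_range.
split => //; first by move=> [|[|[|n]]]; rewrite /return_pmf //=; lra.
apply: cvg_near_cst; exists 3%N => // n /= n3.
rewrite -(ltn_predK n3) big_ltn // -/(Gc _ _) Gc_return_pmf /return_pmf add0r.
by case: n n3 => [|[|[|n]]].
Qed.

Lemma valid_hard_instance : valid hard_instance.
Proof.
have [e0 e1] := andP eps_range; have [q0 q1] := andP q_range.
split => /=.
- by move=> s t; rewrite /arrival; repeat case: ifP => _; lra.
- by move=> [[|[|t]] ht]; rewrite !big_ord_recl big_ord0 /arrival //=; lra.
- by move=> v s; rewrite /match_prob; case: ifP => _; lra.
- exact: is_pmf_pos_return_pmf.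
Qed.

Lemma lift0_ord_max : lift ord0 ord0 = ord_max :> 'I_2.
Proof. exact: val_inj. Qed.

Definition row_value (y : 'I_2 -> 'I_2 -> R) : R :=
  eps * y ord0 ord0 + q * y ord_max ord_max.

Definition saturated (x : sol hard_instance) : Prop :=
  x ord0 ord0 ord0 = 1 /\ x ord0 ord_max ord_max = 1.

Lemma lp_obj_hard (x : sol hard_instance) :
  (forall s t, 0 <= x ord0 s t <= 1) -> lp_obj x = row_value (x ord0).
Proof.
have [e0 e1] := andP eps_range; have [q0 q1] := andP q_range.
move=> x01; rewrite /lp_obj /= !big_ord_recl !big_ord0 /arrival /match_prob /= lift0_ord_max.
have le1 s t : x ord0 s t <= 1 by case/andP: (x01 s t).
have le1_eps s t : x ord0 s t * eps <= 1.
  by have /andP[? ?] := x01 s t; rewrite -[1]mulr1 ler_pM // ltW.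
rewrite !addr0 !mulr1 !min_l ?le1 ?le1_eps //.
by rewrite !mul0r mul1r addr0 add0r /row_value mulrC.
Qed.

Lemma inner_gradf_hard (z w : sol hard_instance) :
  inner z (gradf w) = row_value (z ord0).
Proof.
rewrite /inner /gradf /= big_ord1 !big_ord_recl !big_ord0 /arrival /match_prob /= lift0_ord_max.
rewrite !big1 => [|u|u|u|u]; rewrite ?(ord1 u) ?eqxx //.
rewrite /row_value; ring.
Qed.

Lemma sq_obj_hard (w : sol hard_instance) y : sq_obj w ord0 y = row_value y.
Proof.
rewrite /sq_obj /= !big_ord_recl !big_ord0 /arrival /match_prob /= lift0_ord_max !big1 //.
by rewrite /row_value; ring.
Qed.

Lemma rowfeas_ones : rowfeas (I := hard_instance) (fun _ _ => 1).
Proof.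
have [q0 q1] := andP q_range.
split=> [s t|]; first by rewrite lexx ler01.
move=> [[|[|t]] ht] //; rewrite big_mkcond /= !big_ord_recl !big_ord0 /= /arrival /=.
all: rewrite ?subnn ?subn0 !Gc_return_pmf /=; lra.
Qed.

Lemma eq1_of_row_value_ge_ones (y : 'I_2 -> 'I_2 -> R) :
  rowfeas (I := hard_instance) y -> row_value (fun _ _ => 1) <= row_value y ->
  y ord0 ord0 = 1 /\ y ord_max ord_max = 1.
Proof.
move=> [y01 _]; rewrite /row_value !mulr1.
have le1 s t : y s t <= 1 by case/andP: (y01 s t).
by apply: eq1_of_weighted_sum_ge; rewrite ?le1 //; [case/andP: eps_range | case/andP: q_range].
Qed.

Lemma is_LP_opt_saturated x : is_LP_opt x -> saturated x.
Proof.
move=> [xP xmax]; apply: eq1_of_row_value_ge_ones (xP ord0) _.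
have x01 : forall s t, 0 <= x ord0 s t <= 1 by case: (xP ord0).
have := xmax (fun _ _ _ => 1) (fun _ => rowfeas_ones).
by rewrite !lp_obj_hard // => _ _; rewrite lexx ler01.
Qed.

Lemma is_SQ_out_saturated x : is_SQ_out x -> saturated x.
Proof.
move=> xSQ; have [xfeas xmax] := xSQ ord0.
apply: eq1_of_row_value_ge_ones xfeas _.
by have := xmax _ rowfeas_ones; rewrite !sq_obj_hard.
Qed.

Lemma is_AA_out_saturated m x : (0 < m)%N -> is_AA_out m x -> saturated x.
Proof.
move=> m0 [xs [xs0 xsS xsm]].
suff frac i : (i <= m)%N ->
    xs i ord0 ord0 ord0 = i%:R / m%:R /\ xs i ord0 ord_max ord_max = i%:R / m%:R.
  by rewrite /saturated !xsm; have [-> ->] := frac m (leqnn m); rewrite divff ?pnatr_eq0 -?lt0n.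
elim: i => [|i IH] im; first by rewrite !xs0 mul0r.
have [y [yP ymax xsy]] := xsS i.+1 im.
have [y00 y11] : saturated y.
  apply: eq1_of_row_value_ge_ones (yP ord0) _.
  by have := ymax (fun _ _ _ => 1) (fun _ => rowfeas_ones); rewrite !inner_gradf_hard.
have [xi00 xi11] := IH (ltnW im).
by rewrite !xsy /= xi00 xi11 y00 y11 -mulrDl -natr1.
Qed.

Lemma exante_saturated m x : (0 < m)%N -> exante m x -> saturated x.
Proof.
move=> m0 [xLP [xAA [xSQ [/is_LP_opt_saturated [? ?] /(is_AA_out_saturated m0) [? ?]
  /is_SQ_out_saturated [? ?] xeq _]]]].
by case: xeq => [|[|]] xeq; rewrite /saturated !xeq.
Qed.

Lemma LPval_hard_ge : eps + q <= LPval hard_instance.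
Proof.
have [e0 e1] := andP eps_range; have [q0 q1] := andP q_range.
have <- : lp_obj (I := hard_instance) (fun _ _ _ => 1) = eps + q.
  by rewrite lp_obj_hard => [|_ _]; rewrite ?ler01 ?lexx // /row_value !mulr1.
have onesP : inP (I := hard_instance) (fun _ _ _ => 1) := fun _ => rowfeas_ones.
apply: sup_upper_bound; last by exists (fun _ _ _ => 1).
split; first by eexists; exists (fun _ _ _ => 1).
exists (eps + q) => _ [x xP <-].
have x01 : forall s t, 0 <= x ord0 s t <= 1 by case: (xP ord0).
rewrite lp_obj_hard // /row_value.
move: (x01 ord0 ord0) (x01 ord_max ord_max) => /andP[_ a1] /andP[_ b1]; nra.
Qed.

Lemma val1_hard (x : sol hard_instance) r : x ord0 ord_max ord_max = 1 ->
  Defs.val x 1 r = q * (r ord0 <= 1)%N%:R.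
Proof.
move=> x11; rewrite /= (_ : (2 - 1)%N = @ord_max 1) // !mulr0 addr0.
rewrite !big_ord_recl big_ord0 !lamN_ord !big_set_ord1 !big_ord1 !inE !xN_ord lift0_ord_max.
rewrite /= /arrival /= mul0r add0r addr0 x11 subrr !mul0r add0r mul1r.
rewrite [\sum_D _]big1 => [|D _]; last exact: mulr0.
rewrite addr0 big_mkcond big_ord1 /= inE.
by case: (r ord0 <= 1)%N; rewrite ?subr0 ?subrr.
Qed.

Lemma reward_saturated (x : sol hard_instance) : saturated x -> reward x = eps + q * q.
Proof.
move=> [x00 x11].
(* A symbolic [k] stops [simpl] from also unfolding the inner [val x 1]. *)
suff val2 k : k = 1%N -> Defs.val x k.+1 (fun _ => 0%N) = eps + q * q by exact: val2.
have val1 : Defs.val x 1 = fun r => q * (r ord0 <= 1)%N%:R.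
  by apply: funext => r; exact: val1_hard.
move=> k1 /=; rewrite k1 val1 (_ : (2 - 2)%N = @ord0 1) //.
rewrite !big_ord_recl big_ord0 !lamN_ord !big_set_ord1 !big_ord1 !inE !xN_ord lift0_ord_max.
rewrite /= /arrival /= x00 subrr !mul0r !add0r !addr0 !mul1r big_ord0 addr0 subrr mul0r addr0.
rewrite big_mkcond big_ord1 /= inE /match_prob /= subKr.
under eq_bigr => D _ do rewrite big_ord1 inE /= add0n addn1 ltnS leqn0.
rewrite (bigD1 [ffun => ord0]) //= ffunE eqxx mulr1 big1 ?addr0 => [|D D0].
  by rewrite /wdelay /= /return_pmf /=.
have : D ord0 != ord0.
  by apply: contra D0 => /eqP D_0; apply/eqP/ffunP => i; rewrite (ord1 i) ffunE D_0.
by rewrite -val_eqE /= => /negbTE ->; rewrite !mulr0.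
Qed.

End HardInstance.

Theorem proposition3 (R : realType) (q : R) (hq : 0 < q <= 1)
  (m : nat) (hm : (0 < m)%N)
  (choose : forall I : instance R, sol I)
  (hchoose : forall I : instance R, valid I -> exante m (choose I))
  (c : R) (hc : q < c) :
  exists I : instance R,
    [/\ valid I, mdhr (gm I) q & reward (choose I) < c * LPval I].
Proof.
have [q0 _] := andP hq.
have gap0 : 0 < q * (c - q) by rewrite mulr_gt0 // subr_gt0.
pose eps := Num.min 1 (q * (c - q) / 2).
have eps_range : 0 < eps <= 1 by rewrite lt_min ltr01 divr_gt0 //= ge_min lexx.
have eps_gap : eps < q * (c - q) by rewrite gt_min; apply/orP; right; lra.
have valid_I := valid_hard_instance eps_range hq.
exists (hard_instance eps q); split => //; first exact: mdhr_return_pmf.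
rewrite (reward_saturated (exante_saturated eps_range hq hm (hchoose _ valid_I))).
apply: (lt_le_trans (ratio_lt_of_small_eps q0 hc _ eps_gap)); first by case/andP: eps_range.
by rewrite ler_pM2l ?LPval_hard_ge // (lt_trans q0).
Qed.
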